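(* Let $P$ be a $d$-polytope with symbolic slack matrix $S_P(\mathbf x)$, slack ideal $I_P\subset\mathbb{C}[\mathbf x]$ and non-incidence toric ideal $T_P\subset\mathbb{C}[\mathbf x]$ (all defined in the context). Then $P$ is morally $2$-level if and only if $I_P\subseteq T_P$.
   Context: Let $P\subset\mathbb{R}^d$ be a $d$-dimensional polytope with labelled vertices $\mathbf p_1,\dots,\mathbf p_v$ and labelled facets $F_1,\dots,F_f$. The support (zero pattern) of a slack matrix of $P$ is the $v\times f$ pattern whose $(i,j)$ entry is zero iff $\mathbf p_i\in F_j$. The symbolic slack matrix $S_P(\mathbf x)$ is the $v\times f$ matrix with a $0$ in entry $(i,j)$ if $\mathbf p_i\in F_j$ and a distinct variable $x_{ij}$ otherwise; let $x_1,\dots,x_t$ denote all these variables and $\mathbb{C}[\mathbf x]=\mathbb{C}[x_1,\dots,x_t]$. The slack ideal is $I_P=\langle (d+2)\text{-minors of } S_P(\mathbf x)\rangle : (x_1\cdots x_t)^\infty$, and the slack variety is $\mathcal V(I_P)\subseteq\mathbb{C}^t$; a point $\mathbf s\in\mathbb{C}^t$ is identified with the matrix $S_P(\mathbf s)$. $S_P(\mathbbm{1})$ denotes the $0/1$ matrix obtained by setting every variable to $1$. $P$ is called morally $2$-level if $S_P(\mathbbm 1)\in\mathcal V(I_P)$. The non-incidence graph $G_P$ is the bipartite graph on the vertices and facets of $P$ with an edge $\{\mathbf p_i,F_j\}$ iff $\mathbf p_i\notin F_j$; its edges are thus labelled by the variables $x_{ij}$. $T_P$ is the toric ideal of the vertex-edge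 incidence matrix of $G_P$, i.e. the kernel of the $\mathbb{C}$-algebra map $\mathbb{C}[\mathbf x]\to\mathbb{C}[s_1^{\pm1},\dots,s_v^{\pm1},u_1^{\pm1},\dots,u_f^{\pm1}]$, $x_{ij}\mapsto s_iu_j$. *)

From HB Require Import structures.
From mathcomp Require Import all_boot all_order all_algebra.
From mathcomp Require Import reals.
From mathcomp Require Import complex.
From mathcomp Require Import mpoly.

Set Implicit Arguments.
Unset Strict Implicit.
Unset Printing Implicit Defensive.

Import Order.TTheory GRing.Theory Num.Theory.
Local Open Scope ring_scope.

(* Polytopes: P = conv(pts 0, ..., pts (v-1)) in R^d, with labelled      *)
(* vertices pts and labelled facets, facet j being {x | <x, a j> = b j}  *)
(* intersected with P, where <x, a j> <= b j is valid on P.              *)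
Section Polytope.
Variables (R : realType) (d v f : nat).

Definition dotr (x y : 'rV[R]_d) : R := \sum_(k < d) x 0 k * y 0 k.

(* pts i is a vertex of conv(pts): it is not a convex combination of the
   other points (this also forces the points to be pairwise distinct). *)
Definition is_vertex (pts : 'I_v -> 'rV[R]_d) (i : 'I_v) : Prop :=
  ~ exists lam : 'I_v -> R,
      [/\ forall k, 0 <= lam k, lam i = 0, \sum_(k < v) lam k = 1 &
          pts i = \sum_(k < v) lam k *: pts k].

Definition pt_aug (p : 'rV[R]_d) : 'rV[R]_(d + 1) := row_mx p (const_mx 1).

(* 1 + (dimension of the affine hull of {pts i | i in S}) *)
Definition aff_rank (pts : 'I_v -> 'rV[R]_d) (S : {set 'I_v}) : nat :=
  \rank (\matrix_(i < v) (if i \in S then pt_aug (pts i) else 0)).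

Definition tight (pts : 'I_v -> 'rV[R]_d) (a0 : 'rV[R]_d) (b0 : R) : {set 'I_v} :=
  [set i | dotr (pts i) a0 == b0].

Definition facet_ineq (pts : 'I_v -> 'rV[R]_d) (a0 : 'rV[R]_d) (b0 : R) : Prop :=
  [/\ a0 != 0, forall i, dotr (pts i) a0 <= b0 &
      aff_rank pts (tight pts a0 b0) = d].

Definition is_polytope_labelling (pts : 'I_v -> 'rV[R]_d)
    (a : 'I_f -> 'rV[R]_d) (b : 'I_f -> R) : Prop :=
  [/\ forall i, is_vertex pts i,
      aff_rank pts setT = d + 1,
      forall j, facet_ineq pts (a j) (b j),
      forall j j', tight pts (a j) (b j) = tight pts (a j') (b j') -> j = j' &
      forall a0 b0, facet_ineq pts a0 b0 ->
        exists j, tight pts a0 b0 = tight pts (a j) (b j)].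

Definition incid (pts : 'I_v -> 'rV[R]_d) (a : 'I_f -> 'rV[R]_d) (b : 'I_f -> R)
    (i : 'I_v) (j : 'I_f) : bool :=
  i \in tight pts (a j) (b j).

End Polytope.

Section Ideals.
Variable (A : comNzRingType).

Definition ideal_gen (G : A -> Prop) : A -> Prop :=
  fun p => exists s : seq (A * A),
    (forall g, g \in s -> G g.2) /\ p = \sum_(g <- s) g.1 * g.2.

Definition saturation (I : A -> Prop) (g : A) : A -> Prop :=
  fun p => exists e : nat, I (g ^+ e * p).

Definition minors (k m n : nat) (M : 'M[A]_(m, n)) : A -> Prop :=
  fun q => exists (r : 'I_k -> 'I_m) (c : 'I_k -> 'I_n),
    [/\ injective r, injective c & q = \det (\matrix_(x < k, y < k) M (r x) (c y))].

End Ideals.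

Section Slack.
Variables (K : fieldType) (v f : nat) (inc : 'I_v -> 'I_f -> bool).

(* the non-incident pairs (i,j), i.e. the edges of G_P, i.e. the variables *)
Definition noninc : {set 'I_v * 'I_f} := [set ij | ~~ inc ij.1 ij.2].

(* number t of variables; variable k : 'I_t is x_(enum_val k) *)
Definition nvars : nat := #|noninc|.

Definition var_pair (k : 'I_nvars) : 'I_v * 'I_f := enum_val k.

Definition sym_slack : 'M[{mpoly K[nvars]}]_(v, f) :=
  \matrix_(i < v, j < f) \sum_(k < nvars | var_pair k == (i, j)) 'X_k.

Definition slack_ideal (d : nat) : {mpoly K[nvars]} -> Prop :=
  saturation (ideal_gen (minors (d + 2) sym_slack)) (\prod_(k < nvars) 'X_k).

Definition morally_2level (d : nat) : Prop :=
  forall p, slack_ideal d p -> p.@[fun _ => 1] = 0.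

(* toric ideal T_P: kernel of x_ij |-> s_i u_j, where s_i = X_(lshift f i),
   u_j = X_(rshift v j) in K[s_1..s_v,u_1..u_f] (a subring of the Laurent
   polynomial ring, so the kernel is the same). *)
Definition toric_ideal : {mpoly K[nvars]} -> Prop :=
  fun p => mmap (@mpolyC (v + f) K)
    (fun k : 'I_nvars =>
       ('X_(lshift f (var_pair k).1) * 'X_(rshift v (var_pair k).2))
         : {mpoly K[v + f]}) p = 0.

End Slack.

Arguments sym_slack K {v f} inc.
Arguments slack_ideal K {v f} inc d _.
Arguments morally_2level K {v f} inc d.
Arguments toric_ideal K {v f} inc _.

From HB Require Import structures.
From mathcomp Require Import all_boot all_order all_algebra.
From mathcomp Require Import reals complex mpoly.

(* Scaling row i of S_P(x) by lam_i and column j by mu_j (all nonzero) is the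
   substitution x_ij |-> lam_i mu_j x_ij. It multiplies every minor of S_P(x)
   by a constant and the product of the variables by a nonzero constant, so it
   maps I_P into itself. Hence if S_P(1) lies in V(I_P), every p in I_P
   vanishes at all points (lam_i mu_j), i.e. p(s_i u_j) vanishes on the torus
   of (s, u); over a field of characteristic 0 such a polynomial is zero
   (Kronecker substitution reduces this to one variable), so p lies in T_P.
   Conversely, elements of T_P vanish at s = u = 1, that is at S_P(1). *)

Set Implicit Arguments.
Unset Strict Implicit.
Unset Printing Implicit Defensive.

Import GRing.Theory Num.Theory.
Local Open Scope ring_scope.

Lemma base_expansion_inj (N n : nat) (g h : 'I_n -> nat) :
  (forall i, g i < N)%N -> (forall i, h i < N)%N ->
  (\sum_(i < n) g i * N ^ i = \sum_(i < n) h i * N ^ i)%N -> g =1 h.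
Proof.
elim: n g h => [|n IHn] g h ltgN lthN; first by move=> _ [].
have shift (k : 'I_n.+1 -> nat) : (\sum_(i < n.+1) k i * N ^ i =
    k ord0 + N * \sum_(i < n) k (lift ord0 i) * N ^ i)%N.
  rewrite big_ord_recl expn0 muln1 big_distrr /=; congr (_ + _).
  by apply: eq_bigr => i _; rewrite expnS mulnCA.
rewrite !shift => eq_gh.
have eq0 : g ord0 = h ord0.
  have := congr1 (modn^~ N) eq_gh.
  by rewrite !(addnC (_ ord0)) !(mulnC N) !modnMDl !modn_small.
have N_gt0 : (0 < N)%N by apply: leq_ltn_trans (ltgN ord0).
move: eq_gh; rewrite eq0 => /addnI /eqP; rewrite eqn_pmul2l // => /eqP eq_tail.
have eq_lift := IHn _ _ (fun i => ltgN _) (fun i => lthN _) eq_tail.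
by move=> i; case: (unliftP ord0 i) => [j ->|->].
Qed.

Section KroneckerSubstitution.
Variables (K : idomainType) (n : nat).
Implicit Types (q : {mpoly K[n]}) (m : 'X_{1..n}).

Definition kronecker_exp (N : nat) m : nat := \sum_(i < n) m i * N ^ i.

(* q(x, x^N, x^(N^2), ...) with N = msize q: N exceeds every exponent of q, so
   distinct monomials of q are sent to distinct powers of x. *)
Definition kronecker_subst q : {poly K} :=
  \sum_(m <- msupp q) q@_m *: 'X^(kronecker_exp (msize q) m).

Lemma horner_kronecker_subst q x :
  (kronecker_subst q).[x] = q.@[fun i => x ^+ (msize q ^ i)].
Proof.
rewrite mevalE horner_sum; apply: eq_bigr => m _.
rewrite hornerZ hornerXn -prodrXr; congr (_ * _); apply: eq_bigr => i _.
by rewrite -exprM mulnC.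
Qed.

Lemma mnm_lt_msize q m : m \in msupp q -> forall i, (m i < msize q)%N.
Proof.
move=> /msize_mdeg_lt lt_m i; apply: leq_ltn_trans lt_m.
by rewrite mdegE (bigD1 i) //= leq_addr.
Qed.

Lemma coef_kronecker_subst q m : m \in msupp q ->
  (kronecker_subst q)`_(kronecker_exp (msize q) m) = q@_m.
Proof.
move=> supp_m; rewrite coef_sum (bigD1_seq m) ?msupp_uniq //=.
rewrite coefZ coefXn eqxx mulr1 big1_seq ?addr0 // => m' /andP[ne_m' supp_m'].
rewrite coefZ coefXn; case: eqP => [eq_exp|]; last by rewrite mulr0.
case/eqP: ne_m'; apply/mnmP => i.
by rewrite (base_expansion_inj (mnm_lt_msize supp_m) (mnm_lt_msize supp_m')
  eq_exp).
Qed.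

Lemma kronecker_subst_eq0 q : kronecker_subst q = 0 -> q = 0.
Proof.
move=> kq0; apply/mpolyP => m; rewrite mcoeff0.
have [supp_m|/memN_msupp_eq0 //] := boolP (m \in msupp q).
by rewrite -coef_kronecker_subst // kq0 coef0.
Qed.

End KroneckerSubstitution.

Lemma mpoly_torus_eq0 (K : numDomainType) n (q : {mpoly K[n]}) :
  (forall z : 'I_n -> K, (forall i, z i != 0) -> q.@[z] = 0) -> q = 0.
Proof.
move=> q_torus0; apply: kronecker_subst_eq0.
pose rs : seq K := [seq i.+1%:R | i <- iota 0 (size (kronecker_subst q))].
apply: (@roots_geq_poly_eq0 _ _ rs); last by rewrite size_map size_iota.
  apply/allP => _ /mapP [i _ ->]; rewrite /root horner_kronecker_subst.
  by rewrite q_torus0 // => j; rewrite expf_neq0 // pnatr_eq0.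
by rewrite map_inj_uniq ?iota_uniq // => i j /eqP; rewrite eqr_nat => /eqP [].
Qed.

Section IdealGen.
Variables (A : comNzRingType) (G : A -> Prop).

Lemma ideal_gen0 : ideal_gen G 0.
Proof. by exists [::]; rewrite big_nil. Qed.

Lemma ideal_genD p q : ideal_gen G p -> ideal_gen G q -> ideal_gen G (p + q).
Proof.
move=> [s [Gs ->]] [s' [Gs' ->]]; exists (s ++ s'); rewrite big_cat; split=> //.
by move=> g; rewrite mem_cat => /orP[/Gs|/Gs'].
Qed.

Lemma ideal_genMl r p : ideal_gen G p -> ideal_gen G (r * p).
Proof.
move=> [s [Gs ->]]; exists [seq (r * g.1, g.2) | g <- s]; split.
  by move=> _ /mapP [g /Gs Gg ->].
by rewrite big_map big_distrr; apply: eq_bigr => g _ /=; rewrite mulrA.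
Qed.

Lemma ideal_gen_mem g : G g -> ideal_gen G g.
Proof.
move=> Gg; exists [:: (1, g)]; rewrite big_seq1 mul1r; split=> //.
by move=> g'; rewrite inE => /eqP ->.
Qed.

Lemma ideal_gen_rmorph (phi : {rmorphism A -> A}) :
  (forall g, G g -> ideal_gen G (phi g)) ->
  forall p, ideal_gen G p -> ideal_gen G (phi p).
Proof.
move=> phiG _ [s [Gs ->]]; rewrite rmorph_sum.
elim: s Gs => [|g s IHs] Gs; first by rewrite big_nil; apply: ideal_gen0.
rewrite big_cons rmorphM; apply: ideal_genD.
  by apply/ideal_genMl/phiG/Gs/mem_head.
by apply: IHs => g' s_g'; apply/Gs; rewrite inE s_g' orbT.
Qed.

End IdealGen.

Lemma saturation_rmorph (A : comNzRingType) (I : A -> Prop)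
    (phi : {rmorphism A -> A}) (g u w : A) :
  (forall p, I p -> I (phi p)) -> (forall r p, I p -> I (r * p)) ->
  phi g = u * g -> w * u = 1 ->
  forall p, saturation I g p -> saturation I g (phi p).
Proof.
move=> phiI IM phi_g wu1 p [e Ip]; exists e.
have := IM (w ^+ e) _ (phiI _ Ip).
by rewrite rmorphM rmorphXn phi_g exprMn !mulrA -exprMn wu1 expr1n mul1r.
Qed.

Lemma det_scale_rows_cols (R : comNzRingType) n (l r : 'I_n -> R)
    (M : 'M[R]_n) :
  \det (\matrix_(x, y) (l x * M x y * r y)) =
    \prod_x l x * \prod_y r y * \det M.
Proof.
have -> : \matrix_(x, y) (l x * M x y * r y) =
    diag_mx (\row_x l x) *m M *m diag_mx (\row_y r y).
  by apply/matrixP => x y; rewrite mul_mx_diag mul_diag_mx !mxE.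
rewrite !det_mulmx !det_diag mulrAC.
by congr (_ * _ * _); apply: eq_bigr => x _; rewrite mxE.
Qed.

Lemma meval_mmapC (K : comNzRingType) t n (h : 'I_t -> {mpoly K[n]})
    (w : 'I_n -> K) (p : {mpoly K[t]}) :
  (mmap (@mpolyC n K) h p).@[w] = p.@[fun k => (h k).@[w]].
Proof.
have -> : mmap (@mpolyC n K) h p = comp_mpoly [tuple h k | k < t] p.
  apply: eq_bigr => m _; congr (_ * _).
  by apply: mmap1_eq => k; rewrite tnth_mktuple.
by rewrite comp_mpoly_meval; apply: meval_eq => k; rewrite tnth_mktuple.
Qed.

Section SlackScaling.
Variables (K : fieldType) (v f : nat) (inc : 'I_v -> 'I_f -> bool).
Variables (lam : 'I_v -> K) (mu : 'I_f -> K).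
Local Notation t := (nvars inc).
Local Notation S := (sym_slack K inc).

Definition scale_weight (k : 'I_t) : K :=
  lam (var_pair k).1 * mu (var_pair k).2.

Definition scaled_vars : t.-tuple {mpoly K[t]} :=
  [tuple scale_weight k *: 'X_k | k < t].

Local Notation slack_scale := (comp_mpoly scaled_vars).

Lemma slack_scaleX k : slack_scale 'X_k = scale_weight k *: 'X_k.
Proof. by rewrite /comp_mpoly mmapX mmap1U tnth_mktuple. Qed.

Lemma slack_scale_sym_slack i j :
  slack_scale (S i j) = (lam i)%:MP * S i j * (mu j)%:MP.
Proof.
rewrite mxE rmorph_sum big_distrr big_distrl; apply: eq_bigr => k /eqP ij_k.
by rewrite /= slack_scaleX /scale_weight ij_k -mul_mpolyC mulrAC mpolyCM.
Qed.

Lemma slack_scale_minor k q :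
  minors k S q -> exists c : {mpoly K[t]}, slack_scale q = c * q.
Proof.
move=> [r [c [_ _ ->]]].
exists (\prod_x (lam (r x))%:MP * \prod_y (mu (c y))%:MP).
rewrite -det_map_mx -det_scale_rows_cols; congr (\det _); apply/matrixP => x y.
by have := slack_scale_sym_slack (r x) (c y); rewrite !mxE.
Qed.

Hypotheses (lam_neq0 : forall i, lam i != 0) (mu_neq0 : forall j, mu j != 0).

Lemma slack_ideal_scale d p :
  slack_ideal K inc d p -> slack_ideal K inc d (slack_scale p).
Proof.
set w := \prod_k scale_weight k.
have w_neq0 : w != 0 by apply/prodf_neq0 => k _; rewrite mulf_neq0.
apply: (@saturation_rmorph _ _ _ _ w%:MP w^-1%:MP).
- apply: ideal_gen_rmorph => q minor_q.
  have [c /= ->] := slack_scale_minor minor_q.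
  exact/ideal_genMl/ideal_gen_mem.
- exact: ideal_genMl.
- rewrite /= rmorph_prod mul_mpolyC /w -scaler_prod.
  by apply: eq_bigr => k _; exact: slack_scaleX.
- by rewrite -mpolyCM mulVf.
Qed.

Lemma morally_2level_eval_scaled d p :
  morally_2level K inc d -> slack_ideal K inc d p -> p.@[scale_weight] = 0.
Proof.
move=> m2l /slack_ideal_scale/m2l <-; rewrite comp_mpoly_meval.
by apply: meval_eq => k; rewrite tnth_mktuple mevalZ mevalXU mulr1.
Qed.

End SlackScaling.

Lemma toric_idealP (K : numFieldType) v f (inc : 'I_v -> 'I_f -> bool) p :
  toric_ideal K inc p <->
  (forall z : 'I_(v + f) -> K, (forall k, z k != 0) ->
     p.@[scale_weight (fun i => z (lshift f i)) (fun j => z (rshift v j))] = 0).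
Proof.
rewrite /toric_ideal; set toric_map := mmap _ _ p.
have eval_toric_map z : toric_map.@[z] =
    p.@[scale_weight (fun i => z (lshift f i)) (fun j => z (rshift v j))].
  by rewrite meval_mmapC; apply: meval_eq => k; rewrite mevalM !mevalXU.
split=> [toric0 z _ | vanish]; first by rewrite -eval_toric_map toric0 meval0.
by apply: mpoly_torus_eq0 => z z_neq0; rewrite eval_toric_map vanish.
Qed.

Theorem theorem3p6 (R : realType) (d v f : nat) (pts : 'I_v -> 'rV[R]_d)
    (a : 'I_f -> 'rV[R]_d) (b : 'I_f -> R) :
  is_polytope_labelling pts a b ->
  (morally_2level (complex R) (incid pts a b) d <->
   (forall p, slack_ideal (complex R) (incid pts a b) d p ->
              toric_ideal (complex R) (incid pts a b) p)).
Proof.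
move=> _; split=> [m2l p Ip | IT p /IT /toric_idealP toric_p].
  apply/toric_idealP => z z_neq0.
  by apply: (morally_2level_eval_scaled _ _ m2l Ip) => i; apply: z_neq0.
have := toric_p (fun _ => 1) (fun _ => oner_neq0 _).
by rewrite /scale_weight mulr1.
Qed.
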